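(* Let $a_{11},a_{12},a_{21},a_{22}\in\mathbb{R}$, $\sigma_x,\sigma_y>0$ be fixed with $a_{22}<0$ and $a_{11}a_{22}-a_{12}a_{21}>0$; set $\tilde a:=a_{11}-a_{12}a_{21}/a_{22}$. For $\epsilon>0$ let $A_\epsilon=\begin{pmatrix} a_{11} & a_{12}\\ a_{21}/\epsilon & a_{22}/\epsilon\end{pmatrix}$, $Q=\begin{pmatrix}\sigma_x^2&0\\0&\sigma_y^2/\epsilon\end{pmatrix}$, and for $\epsilon$ small enough let $\Sigma=(\Sigma_{ij})$ be the unique solution of the Lyapunov equation $A_\epsilon\Sigma+\Sigma A_\epsilon^{\top}=-Q$, and let $\lambda_1,\lambda_2$ be the real eigenvalues $\lambda_{1,2}=\frac12\big(a_{11}+\frac{a_{22}}{\epsilon}\pm\sqrt{\Delta}\big)$ with $\Delta=(a_{11}+a_{22}/\epsilon)^2-4a_{22}\tilde a/\epsilon$. Define $$\hat b:=\lambda_1,\qquad \hat\sigma^2:=-2\lambda_1\,\frac{\Sigma_{11}(\lambda_2-a_{11})-\Sigma_{21}a_{12}}{\lambda_2-\lambda_1}.$$ Then, as $\epsilon\to0^+$, $$\hat b=\tilde a-\frac{a_{12}a_{21}\tilde a}{a_{22}^2}\epsilon+O(\epsilon^2),\qquad \hat\sigma^2=\sigma_x^2-\frac{2\sigma_x^2a_{12}a_{21}-\sigma_y^2a_{12}^2}{a_{22}^2}\,\epsilon+O(\epsilon^2).$$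
   Context: $\Sigma$ is the stationary covariance matrix of the two-dimensional Ornstein–Uhlenbeck process $\dot x=a_{11}x+a_{12}y+\sigma_x\dot W_x$, $\dot y=\frac1\epsilon(a_{21}x+a_{22}y)+\frac{\sigma_y}{\sqrt\epsilon}\dot W_y$ with independent standard Wiener processes $W_x,W_y$. *)

From Stdlib Require Import Reals.
Open Scope R_scope.

Record M2 : Type := mkM2 { m11 : R; m12 : R; m21 : R; m22 : R }.

Definition addM (A B : M2) : M2 :=
  mkM2 (m11 A + m11 B) (m12 A + m12 B) (m21 A + m21 B) (m22 A + m22 B).
Definition oppM (A : M2) : M2 := mkM2 (- m11 A) (- m12 A) (- m21 A) (- m22 A).
Definition mulM (A B : M2) : M2 :=
  mkM2 (m11 A * m11 B + m12 A * m21 B) (m11 A * m12 B + m12 A * m22 B)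
       (m21 A * m11 B + m22 A * m21 B) (m21 A * m12 B + m22 A * m22 B).
Definition trM (A : M2) : M2 := mkM2 (m11 A) (m21 A) (m12 A) (m22 A).

Definition A_eps (a11 a12 a21 a22 eps : R) : M2 :=
  mkM2 a11 a12 (a21 / eps) (a22 / eps).
Definition Q_eps (sx sy eps : R) : M2 := mkM2 (sx ^ 2) 0 0 (sy ^ 2 / eps).

Definition lyapunov (A S Q : M2) : Prop :=
  addM (mulM A S) (mulM S (trM A)) = oppM Q.

Definition atilde (a11 a12 a21 a22 : R) : R := a11 - a12 * a21 / a22.

Definition Delta (a11 a12 a21 a22 eps : R) : R :=
  (a11 + a22 / eps) ^ 2 - 4 * a22 * atilde a11 a12 a21 a22 / eps.

Definition lambda1 (a11 a12 a21 a22 eps : R) : R :=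
  / 2 * (a11 + a22 / eps + sqrt (Delta a11 a12 a21 a22 eps)).
Definition lambda2 (a11 a12 a21 a22 eps : R) : R :=
  / 2 * (a11 + a22 / eps - sqrt (Delta a11 a12 a21 a22 eps)).

Definition bhat (a11 a12 a21 a22 eps : R) : R := lambda1 a11 a12 a21 a22 eps.

Definition sigma2hat (a11 a12 a21 a22 eps : R) (S : M2) : R :=
  let l1 := lambda1 a11 a12 a21 a22 eps in
  let l2 := lambda2 a11 a12 a21 a22 eps in
  - 2 * l1 * ((m11 S * (l2 - a11) - m21 S * a12) / (l2 - l1)).

Definition bigO_eps2 (f : R -> R) : Prop :=
  exists C delta, 0 < delta /\
    forall eps, 0 < eps < delta -> Rabs (f eps) <= C * eps ^ 2.

(* The scaled eigenvalues mu_i = eps * lambda_i are the roots of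
   z^2 - (a11 eps + a22) z + a22 atilde eps, which at eps = 0 are 0 and a22 < 0.
   The roots stay apart, so mu_1 differs from the guess atilde eps + beta eps^2
   by the value of the quadratic at the guess (a multiple of eps^3) divided by
   the distance from the guess to mu_2 (close to -a22).  Eliminating Sigma from
   the Lyapunov equation gives
     sigma2hat * (mu_2^2 - mu_1^2) = (a22^2 - mu_1^2) sx^2 + a12^2 sy^2 eps,
   and inserting the expansion of mu_1 makes sigma2hat minus its expansion
   eps^2 times a function continuous at 0. *)
From Pilot Require Import Defs.
From Stdlib Require Import Reals Lra Psatz.
From Coquelicot Require Import Coquelicot.
Open Scope R_scope.

Lemma at_right_0_intro (P : R -> Prop) (delta : R) :
  0 < delta -> (forall eps, 0 < eps < delta -> P eps) -> at_right 0 P.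
Proof.
  intros Hdelta HP. exists (mkposreal delta Hdelta). intros eps Heps Heps0.
  apply HP. split; [exact Heps0|].
  change (Rabs (eps - 0) < delta) in Heps.
  rewrite Rminus_0_r, Rabs_pos_eq in Heps; lra.
Qed.

Lemma at_right_0_gt : at_right 0 (fun eps => 0 < eps).
Proof. apply (at_right_0_intro _ 1); [lra | tauto]. Qed.

Lemma at_right_0_near_continuous (g : R -> R) (r : R) :
  continuous g 0 -> 0 < r -> at_right 0 (fun eps => Rabs (g eps - g 0) < r).
Proof.
  intros Hg Hr. apply (filterlim_locally g (g 0)) with (eps := mkposreal r Hr) in Hg.
  destruct Hg as [d Hd]. exists d. intros eps Heps _. exact (Hd eps Heps).
Qed.

Lemma at_right_0_pos_continuous (g : R -> R) :
  continuous g 0 -> 0 < g 0 -> at_right 0 (fun eps => 0 < g eps).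
Proof.
  intros Hg Hg0. apply (filter_imp (fun eps => Rabs (g eps - g 0) < g 0)).
  - intros eps Heps. apply Rabs_def2 in Heps. lra.
  - exact (at_right_0_near_continuous g (g 0) Hg Hg0).
Qed.

Lemma bigO_eps2_of_factor (f g : R -> R) :
  at_right 0 (fun eps => f eps = eps ^ 2 * g eps) -> continuous g 0 -> bigO_eps2 f.
Proof.
  intros Hfg Hg.
  destruct (filter_and _ _ Hfg (at_right_0_near_continuous g 1 Hg Rlt_0_1))
    as [delta Hdelta].
  exists (Rabs (g 0) + 1), delta. split; [apply cond_pos|].
  intros eps [Heps0 Heps].
  assert (Hball : ball 0 delta eps).
  { change (Rabs (eps - 0) < delta). rewrite Rminus_0_r, Rabs_pos_eq; lra. }
  destruct (Hdelta eps Hball Heps0) as [-> Hnear].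
  rewrite Rabs_mult, (Rabs_pos_eq (eps ^ 2)) by (apply pow_le; lra).
  rewrite Rmult_comm. apply Rmult_le_compat_r; [apply pow_le; lra|].
  pose proof (Rabs_triang_inv (g eps) (g 0)). lra.
Qed.

Lemma root_perturbation (u v w s p : R) :
  u + v = s -> u * v = p -> (u - w) * (w - v) = - (w ^ 2 - s * w + p).
Proof. intros <- <-. ring. Qed.

Lemma lyapunov_eigen_identity (a b c d sg k x y : R) (S : M2) :
  lyapunov (mkM2 a b c d) S (mkM2 sg 0 0 k) ->
  x + y = a + d -> x * y = a * d - b * c ->
  (m11 S * (y - a) - m21 S * b) * (2 * x * (x + y))
  = (x * x - d * d) * sg - b * b * k.
Proof.
  destruct S as [p q r s].
  unfold lyapunov, addM, mulM, trM, oppM. cbn [m11 m12 m21 m22].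
  intros HS Hsum Hprod.
  injection HS as E11 E12 E21 E22.
  apply Rminus_diag_eq in Hsum, Hprod, E11, E12, E21, E22.
  apply Rminus_diag_uniq.
  (* The difference is a combination of the Vieta relations and the four
     entries of the Lyapunov equation. *)
  transitivity
   (- (x + d) * ((x - d) * (a * p + b * r + (p * a + q * b) - - sg)
                 + b * (c * p + d * r + (r * a + s * b) - - 0))
    + b * ((x - d) * (a * q + b * s + (p * c + q * d) - - 0)
           + b * (c * q + d * s + (r * c + s * d) - - k))
    - p * (- (x + y - (a + d))) * 2 * x * (x + y)
    + ((x - d) * p + b * r) * (x * (- (x + y - (a + d))) - (x * y - (a * d - b * c)))
    + (x * (- (x + y - (a + d))) + (x * y - (a * d - b * c))) * ((x + d) * p - b * q)).
  - ring.
  - rewrite Hsum, Hprod, E11, E12, E21, E22. ring.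
Qed.

Section ScaledEigenvalues.

Variables a11 a12 a21 a22 sx sy : R.
Hypothesis Ha22 : a22 < 0.

Let atl := atilde a11 a12 a21 a22.
Let beta := - (a12 * a21 * atl / a22 ^ 2).

(* eps^2 * Delta, which stays positive at eps = 0 *)
Definition disc (eps : R) : R := (a11 * eps + a22) ^ 2 - 4 * a22 * atl * eps.
Definition mu1 (eps : R) : R := (a11 * eps + a22 + sqrt (disc eps)) / 2.
Definition mu2 (eps : R) : R := (a11 * eps + a22 - sqrt (disc eps)) / 2.
Definition mu1_approx (eps : R) : R := atl * eps + beta * eps ^ 2.
Definition mu1_rem (eps : R) : R :=
  - (beta * (2 * atl - a11) + beta ^ 2 * eps) / (mu1_approx eps - mu2 eps).

Lemma sqrt_disc_0 : sqrt (disc 0) = - a22.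
Proof.
  replace (disc 0) with ((- a22) ^ 2) by (unfold disc; ring).
  apply sqrt_pow2. lra.
Qed.

Lemma mu1_0 : mu1 0 = 0.
Proof. unfold mu1. rewrite sqrt_disc_0. field. Qed.

Lemma mu2_0 : mu2 0 = a22.
Proof. unfold mu2. rewrite sqrt_disc_0. field. Qed.

Lemma ex_derive_mu1 : ex_derive mu1 0.
Proof. unfold mu1, disc. auto_derive. nra. Qed.

Lemma ex_derive_mu2 : ex_derive mu2 0.
Proof. unfold mu2, disc. auto_derive. nra. Qed.

Lemma sqrt_Delta (eps : R) :
  0 < eps -> sqrt (Defs.Delta a11 a12 a21 a22 eps) = sqrt (disc eps) / eps.
Proof.
  intro Heps.
  replace (Defs.Delta a11 a12 a21 a22 eps) with (disc eps / eps ^ 2)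
    by (unfold Defs.Delta, disc; fold atl; field; lra).
  rewrite sqrt_div_alt by (apply pow_lt; lra).
  rewrite sqrt_pow2 by lra. reflexivity.
Qed.

Lemma lambda1_scaled (eps : R) : 0 < eps -> eps * lambda1 a11 a12 a21 a22 eps = mu1 eps.
Proof. intro Heps. unfold lambda1, mu1. rewrite sqrt_Delta by exact Heps. field. lra. Qed.

Lemma lambda2_scaled (eps : R) : 0 < eps -> eps * lambda2 a11 a12 a21 a22 eps = mu2 eps.
Proof. intro Heps. unfold lambda2, mu2. rewrite sqrt_Delta by exact Heps. field. lra. Qed.

Lemma mu1_add_mu2 (eps : R) : mu1 eps + mu2 eps = a11 * eps + a22.
Proof. unfold mu1, mu2. field. Qed.

Lemma mu1_mul_mu2 (eps : R) : 0 <= disc eps -> mu1 eps * mu2 eps = a22 * atl * eps.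
Proof.
  intro Hdisc. unfold mu1, mu2.
  transitivity (((a11 * eps + a22) ^ 2 - sqrt (disc eps) * sqrt (disc eps)) / 4); [field|].
  rewrite sqrt_sqrt by exact Hdisc. unfold disc. field.
Qed.

Lemma disc_pos_near0 : at_right 0 (fun eps => 0 < disc eps).
Proof.
  apply at_right_0_pos_continuous.
  - apply (ex_derive_continuous (V := R_NormedModule)). unfold disc. auto_derive. exact I.
  - unfold disc. nra.
Qed.

Lemma root_gap_pos_near0 : at_right 0 (fun eps => 0 < mu1_approx eps - mu2 eps).
Proof.
  apply at_right_0_pos_continuous.
  - apply (ex_derive_continuous (V := R_NormedModule)). unfold mu1_approx.
    auto_derive. exact ex_derive_mu2.
  - unfold mu1_approx. rewrite mu2_0. lra.
Qed.

Lemma ex_derive_mu1_rem : ex_derive mu1_rem 0.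
Proof.
  unfold mu1_rem, mu1_approx. auto_derive.
  rewrite mu2_0. repeat split; [exact ex_derive_mu2 | lra].
Qed.

Lemma quadratic_at_mu1_approx (eps : R) :
  mu1_approx eps ^ 2 - (a11 * eps + a22) * mu1_approx eps + a22 * atl * eps
  = eps ^ 3 * (beta * (2 * atl - a11) + beta ^ 2 * eps).
Proof. unfold mu1_approx, beta, atl, atilde. field. lra. Qed.

Lemma mu1_sub_mu1_approx (eps : R) :
  0 <= disc eps -> 0 < mu1_approx eps - mu2 eps ->
  mu1 eps - mu1_approx eps = eps ^ 3 * mu1_rem eps.
Proof.
  intros Hdisc Hgap.
  pose proof (root_perturbation _ _ (mu1_approx eps) _ _
                (mu1_add_mu2 eps) (mu1_mul_mu2 eps Hdisc)) as Hroot.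
  rewrite quadratic_at_mu1_approx in Hroot.
  unfold mu1_rem. apply (Rmult_eq_reg_r (mu1_approx eps - mu2 eps)); [|lra].
  rewrite Hroot. field. lra.
Qed.

Lemma bhat_expansion :
  bigO_eps2 (fun eps => bhat a11 a12 a21 a22 eps
     - (atilde a11 a12 a21 a22 - a12 * a21 * atilde a11 a12 a21 a22 / a22 ^ 2 * eps)).
Proof.
  apply bigO_eps2_of_factor with mu1_rem;
    [|exact (ex_derive_continuous (V := R_NormedModule) _ _ ex_derive_mu1_rem)].
  apply (filter_imp (fun eps => 0 < eps /\ 0 < disc eps /\ 0 < mu1_approx eps - mu2 eps)).
  - intros eps (Heps & Hdisc & Hgap). fold atl. unfold bhat.
    replace (lambda1 a11 a12 a21 a22 eps) with (mu1 eps / eps)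
      by (rewrite <- lambda1_scaled by exact Heps; field; lra).
    replace (mu1 eps) with (mu1_approx eps + eps ^ 3 * mu1_rem eps)
      by (rewrite <- mu1_sub_mu1_approx by lra; ring).
    unfold mu1_approx, beta. field. lra.
  - apply filter_and; [exact at_right_0_gt|].
    exact (filter_and _ _ disc_pos_near0 root_gap_pos_near0).
Qed.

Let h1 := - (2 * sx ^ 2 * a12 * a21 - sy ^ 2 * a12 ^ 2) / a22 ^ 2.
Let c0 := - sx ^ 2 * (a11 - atl) ^ 2 + 2 * a22 * h1 * (atl - a11).
Let c1 := h1 * a11 * (2 * atl - a11).

Definition numerator_cofactor (eps : R) : R :=
  - (mu1 eps + atl * eps) * sx ^ 2 + 2 * (sx ^ 2 + h1 * eps) * (a11 * eps + a22).
Definition sigma2hat_rem (eps : R) : R :=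
  (c0 + c1 * eps + (beta + eps * mu1_rem eps) * numerator_cofactor eps)
  / (mu2 eps ^ 2 - mu1 eps ^ 2).

Lemma sigma2hat_scaled (eps : R) (S : M2) :
  0 < eps -> 0 < disc eps ->
  lyapunov (A_eps a11 a12 a21 a22 eps) S (Q_eps sx sy eps) ->
  sigma2hat a11 a12 a21 a22 eps S * (mu2 eps ^ 2 - mu1 eps ^ 2)
  = (a22 ^ 2 - mu1 eps ^ 2) * sx ^ 2 + a12 ^ 2 * sy ^ 2 * eps.
Proof.
  intros Heps Hdisc HS.
  set (x := lambda1 a11 a12 a21 a22 eps). set (y := lambda2 a11 a12 a21 a22 eps).
  assert (Hx : mu1 eps = eps * x) by (symmetry; exact (lambda1_scaled eps Heps)).
  assert (Hy : mu2 eps = eps * y) by (symmetry; exact (lambda2_scaled eps Heps)).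
  assert (Hsum : x + y = a11 + a22 / eps).
  { apply (Rmult_eq_reg_l eps); [|lra].
    transitivity (mu1 eps + mu2 eps); [rewrite Hx, Hy; ring|].
    rewrite mu1_add_mu2. field. lra. }
  assert (Hprod : x * y = a11 * (a22 / eps) - a12 * (a21 / eps)).
  { apply (Rmult_eq_reg_l (eps ^ 2)); [|apply pow_nonzero; lra].
    transitivity (mu1 eps * mu2 eps); [rewrite Hx, Hy; ring|].
    rewrite mu1_mul_mu2 by lra. unfold atl, atilde. field. lra. }
  pose proof (lyapunov_eigen_identity _ _ _ _ _ _ _ _ _ HS Hsum Hprod) as Hid.
  assert (Hyx : y - x <> 0).
  { intro Hxy. assert (Hmu : mu1 eps = mu2 eps) by (rewrite Hx, Hy; nra).
    unfold mu1, mu2 in Hmu. pose proof (sqrt_lt_R0 _ Hdisc). lra. }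
  unfold sigma2hat. fold x y. rewrite Hx.
  replace (mu2 eps ^ 2 - (eps * x) ^ 2) with (eps ^ 2 * ((y - x) * (x + y)))
    by (rewrite Hy; ring).
  replace (- 2 * x * ((m11 S * (y - a11) - m21 S * a12) / (y - x))
           * (eps ^ 2 * ((y - x) * (x + y))))
    with (- eps ^ 2 * ((m11 S * (y - a11) - m21 S * a12) * (2 * x * (x + y))))
    by (field; exact Hyx).
  rewrite Hid. field. lra.
Qed.

Lemma numerator_expansion (u eps : R) :
  (a22 ^ 2 - u ^ 2) * sx ^ 2 + a12 ^ 2 * sy ^ 2 * eps
  - (sx ^ 2 + h1 * eps) * ((a11 * eps + a22 - u) ^ 2 - u ^ 2)
  = eps ^ 2 * (c0 + c1 * eps)
    + (u - atl * eps) * (- (u + atl * eps) * sx ^ 2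
                         + 2 * (sx ^ 2 + h1 * eps) * (a11 * eps + a22)).
Proof. unfold c0, c1, h1, atl, atilde. field. lra. Qed.

Lemma mu_sq_diff_pos_near0 : at_right 0 (fun eps => 0 < mu2 eps ^ 2 - mu1 eps ^ 2).
Proof.
  apply at_right_0_pos_continuous.
  - apply (ex_derive_continuous (V := R_NormedModule)).
    auto_derive. auto using ex_derive_mu1, ex_derive_mu2.
  - rewrite mu1_0, mu2_0. nra.
Qed.

Lemma ex_derive_sigma2hat_rem : ex_derive sigma2hat_rem 0.
Proof.
  unfold sigma2hat_rem, numerator_cofactor. auto_derive. rewrite mu1_0, mu2_0.
  repeat split; auto using ex_derive_mu1_rem, ex_derive_mu1, ex_derive_mu2; nra.
Qed.

Lemma sigma2hat_expansion (Sig : R -> M2) :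
  at_right 0 (fun eps => lyapunov (A_eps a11 a12 a21 a22 eps) (Sig eps) (Q_eps sx sy eps)) ->
  bigO_eps2 (fun eps => sigma2hat a11 a12 a21 a22 eps (Sig eps)
     - (sx ^ 2 - (2 * sx ^ 2 * a12 * a21 - sy ^ 2 * a12 ^ 2) / a22 ^ 2 * eps)).
Proof.
  intro HSig.
  apply bigO_eps2_of_factor with sigma2hat_rem;
    [|exact (ex_derive_continuous (V := R_NormedModule) _ _ ex_derive_sigma2hat_rem)].
  apply (filter_imp (fun eps => (0 < eps /\ 0 < disc eps /\ 0 < mu1_approx eps - mu2 eps)
    /\ 0 < mu2 eps ^ 2 - mu1 eps ^ 2
    /\ lyapunov (A_eps a11 a12 a21 a22 eps) (Sig eps) (Q_eps sx sy eps))).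
  - intros eps ((Heps & Hdisc & Hgap) & Hsq & HS).
    pose proof (sigma2hat_scaled eps (Sig eps) Heps Hdisc HS) as Hsig.
    set (sig := sigma2hat a11 a12 a21 a22 eps (Sig eps)) in *.
    assert (Hmu1 : mu1 eps - atl * eps = eps ^ 2 * (beta + eps * mu1_rem eps)).
    { replace (mu1 eps - atl * eps) with (mu1 eps - mu1_approx eps + beta * eps ^ 2)
        by (unfold mu1_approx; ring).
      rewrite mu1_sub_mu1_approx by lra. ring. }
    pose proof (numerator_expansion (mu1 eps) eps) as Hnum.
    replace (a11 * eps + a22 - mu1 eps) with (mu2 eps) in Hnum
      by (rewrite <- mu1_add_mu2; ring).
    rewrite <- Hsig, Hmu1 in Hnum.
    replace (sx ^ 2 - (2 * sx ^ 2 * a12 * a21 - sy ^ 2 * a12 ^ 2) / a22 ^ 2 * eps)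
      with (sx ^ 2 + h1 * eps) by (unfold h1; field; lra).
    transitivity ((sig * (mu2 eps ^ 2 - mu1 eps ^ 2)
                   - (sx ^ 2 + h1 * eps) * (mu2 eps ^ 2 - mu1 eps ^ 2))
                  / (mu2 eps ^ 2 - mu1 eps ^ 2)); [field; lra|].
    rewrite Hnum. unfold sigma2hat_rem, numerator_cofactor. field. lra.
  - repeat apply filter_and; auto using at_right_0_gt, disc_pos_near0,
      root_gap_pos_near0, mu_sq_diff_pos_near0.
Qed.

End ScaledEigenvalues.

Theorem mainTheorem2 (a11 a12 a21 a22 sx sy : R) (Sig : R -> M2) :
  0 < sx -> 0 < sy -> a22 < 0 -> a11 * a22 - a12 * a21 > 0 ->
  (exists eps0, 0 < eps0 /\ forall eps, 0 < eps < eps0 ->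
     lyapunov (A_eps a11 a12 a21 a22 eps) (Sig eps) (Q_eps sx sy eps)) ->
  bigO_eps2 (fun eps => bhat a11 a12 a21 a22 eps
     - (atilde a11 a12 a21 a22
        - a12 * a21 * atilde a11 a12 a21 a22 / a22 ^ 2 * eps)) /\
  bigO_eps2 (fun eps => sigma2hat a11 a12 a21 a22 eps (Sig eps)
     - (sx ^ 2 - (2 * sx ^ 2 * a12 * a21 - sy ^ 2 * a12 ^ 2) / a22 ^ 2 * eps)).
Proof.
  (* Only a22 < 0 is used: it keeps the scaled eigenvalues apart at eps = 0.
     The existence of a Lyapunov solution already rules out a singular drift. *)
  intros _ _ Ha22 _ [eps0 [Heps0 Hlyap]].
  split.
  - exact (bhat_expansion a11 a12 a21 a22 Ha22).
  - exact (sigma2hat_expansion a11 a12 a21 a22 sx sy Ha22 Sig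
             (at_right_0_intro _ eps0 Heps0 Hlyap)).
Qed.
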